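(* Let $\alpha>-1$, $d\in\widetilde{D}$, $p=(L_n^{(\alpha+1)})_{n\in\mathbb{N}_0}$, $q=(L_n^{(\alpha)})_{n\in\mathbb{N}_0}$, and let $T=E_{p,d}$ be regarded as an operator in $H(q)$ with domain $\mathcal{P}_c$. Let $f=\sum_kf_kq_k\in H(q)$ be such that (i) $\lim_{n\to\infty}\sum_{u=1}^nf_u(d_u-d_{u-1})$ exists and is finite, say equal to $S$; (ii) the sequence $(g_k)_{k\in\mathbb{N}_0}$ defined by $g_0=S+f_0d_0$ and $g_k=S-\sum_{u=1}^kf_u(d_u-d_{u-1})+f_kd_k$ for $k\ge1$ is in $\ell_2$; (iii) $\lim_{n\to\infty}(n+1)|f_nd_n-g_n|^2=0$. Then $f\in D(\overline{T})$ and $g=\lim_{n\to\infty}\sum_{t=0}^ng_tq_t$ is the unique element of $H(q)$ such that $(f,g)\in G(\overline{T})$.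
   Context: $\mathcal{P}_c$ is the space of polynomials in one real variable with complex coefficients. For $\beta>-1$, $L_n^{(\beta)}(x)=\sum_{k=0}^n\frac{(-1)^k}{k!}\binom{n+\beta}{n-k}x^k$ is the generalized Laguerre polynomial. For a sequence $Q=(Q_n)$ of polynomials with $\deg Q_n=n$, $H(Q)$ is the completion of $\mathcal{P}_c$ with respect to the inner product making $(Q_n)$ orthonormal; $g\in H(Q)$ is written $g=\sum_kg_kQ_k$, $(g_k)\in\ell_2$. $\widetilde{D}$ is the set of non-constant sequences of non-zero complex numbers. For a polynomial sequence $p$ and $d\in\widetilde{D}$, $E_{p,d}$ is the linear map on $\mathcal{P}_c$ with $E_{p,d}(p_n)=d_np_n$. $\overline{T}$ denotes the closure of $T$, whose graph $G(\overline{T})$ is the closure of the graph of $T$ in $H(q)\times H(q)$. *)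

From HB Require Import structures.
From mathcomp Require Import all_boot all_order all_algebra.
From mathcomp Require Import all_classical all_reals all_analysis.
From mathcomp Require Import complex.
Set Implicit Arguments. Unset Strict Implicit. Unset Printing Implicit Defensive.
Import Order.TTheory GRing.Theory Num.Theory numFieldNormedType.Exports.
Local Open Scope ring_scope.

Definition sqmod (R : realType) (z : R[i]) : R :=
  (complex.Re z) ^+ 2 + (complex.Im z) ^+ 2.

Definition gbinom (R : realType) (x : R) (m : nat) : R :=
  (\prod_(i < m) (x - i%:R)) / (m`!)%:R.

Definition laguerre (R : realType) (b : R) (n : nat) : {poly R[i]} :=
  \sum_(k < n.+1)
    (real_complex R ((-1) ^+ k / (k`!)%:R * gbinom (n%:R + b) (n - k)) *: 'X^k).

Definition inDtilde (R : realType) (d : nat -> R[i]) : Prop :=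
  (forall n, d n != 0) /\ exists m n, d m != d n.

Definition l2 (R : realType) (c : nat -> R[i]) : Prop :=
  cvgn (series (fun k => sqmod (c k))).

Definition l2dist2 (R : realType) (a b : nat -> R[i]) : R :=
  limn (series (fun k => sqmod (a k - b k))).

(* c is the (finitely supported) coordinate sequence of the polynomial P in the
   basis q = (L_n^(alpha)); this is how P_c sits inside H(q) ~ l_2 *)
Definition qcoord (R : realType) (alpha : R) (P : {poly R[i]}) (c : nat -> R[i]) : Prop :=
  exists N, (forall k, (N <= k)%N -> c k = 0) /\
            P = \sum_(k < N) c k *: laguerre alpha k.

(* (f, g) (elements of H(q) given by their coefficient sequences) lies in the
   closure in H(q) x H(q) of the graph {(P, T P) : P in P_c} of T *)
Definition in_graph_closure (R : realType) (alpha : R)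
    (T : {poly R[i]} -> {poly R[i]}) (f g : nat -> R[i]) : Prop :=
  forall e : R, 0 < e -> exists (P : {poly R[i]}) (c t : nat -> R[i]),
    [/\ qcoord alpha P c, qcoord alpha (T P) t, l2dist2 f c < e & l2dist2 g t < e].

Definition in_closure_domain (R : realType) (alpha : R)
    (T : {poly R[i]} -> {poly R[i]}) (f : nat -> R[i]) : Prop :=
  exists g, l2 g /\ in_graph_closure alpha T f g.

Definition psum (R : realType) (f d : nat -> R[i]) (n : nat) : R[i] :=
  \sum_(1 <= u < n.+1) f u * (d u - d u.-1).

Definition gseq (R : realType) (f d : nat -> R[i]) (S : R[i]) (k : nat) : R[i] :=
  if k == 0%N then S + f 0%N * d 0%N else S - psum f d k + f k * d k.

From HB Require Import structures.
From mathcomp Require Import all_boot all_order all_algebra.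
From mathcomp Require Import all_classical all_reals all_analysis.
From mathcomp Require Import complex.
From mathcomp Require Import ring lra.
Import Order.TTheory GRing.Theory Num.Theory numFieldNormedType.Exports.
Local Open Scope classical_set_scope.
Local Open Scope ring_scope.

(* Write P in the basis q_n = L_n^(alpha) as sum_k c_k q_k.  Since
   p_n = L_n^(alpha+1) = q_0 + ... + q_n, Abel summation gives
   P = sum_k (c_k - c_{k+1}) p_k, so T P = sum_k d_k (c_k - c_{k+1}) p_k, and
   the q-coordinates t of T P are characterised by t_k - t_{k+1} = d_k (c_k - c_{k+1}).
   This difference relation passes to limits in l_2 coordinatewise, so every
   (f, h) in the closed graph satisfies it; g satisfies it by construction, and two
   l_2 sequences with the same differences coincide.  Conversely, truncating f after
   n and shifting g by the constant g_n - f_n d_n gives points of the graph at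
   squared distance (tail of f) + (tail of g) + (n+1) |f_n d_n - g_n|^2 from (f, g),
   which tends to 0 by (iii). *)

Lemma sum_ord_widen {V : nmodType} {F : nat -> V} {N M : nat} :
  (forall k, (N <= k)%N -> F k = 0) -> (N <= M)%N ->
  \sum_(k < N) F k = \sum_(k < M) F k.
Proof.
move=> F0 NM; rewrite (big_ord_widen _ _ NM) big_mkcond /=.
by apply: eq_bigr => k _; case: ltnP => // /F0 ->.
Qed.

Lemma sumZ_partial_sums (K : pzRingType) (V : lmodType K) (c : nat -> K)
    (G : nat -> V) N :
  \sum_(n < N) (c n - c n.+1) *: \sum_(k < n.+1) G k
  = \sum_(k < N) (c k - c N) *: G k.
Proof.
elim: N => [|N IH]; first by rewrite !big_ord0.
rewrite big_ord_recr /= IH [RHS]big_ord_recr /= big_ord_recr /=.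
rewrite scalerDr addrA scaler_sumr -big_split /=; congr (_ + _).
by apply: eq_bigr => k _; rewrite -scalerDl addrA subrK.
Qed.

Lemma linear_sumZ {K : pzRingType} {V W : lmodType K} (T : V -> W) :
  (forall (a : K) (u v : V), T (a *: u + v) = a *: T u + T v) ->
  forall N (a : nat -> K) (F : nat -> V),
  T (\sum_(k < N) a k *: F k) = \sum_(k < N) a k *: T (F k).
Proof.
move=> hT N a F; pose TL : {linear V -> W} := HB.pack T (GRing.isLinear.Build K V W *:%R T hT).
by rewrite -[T]/(TL : V -> W) linear_sum; apply: eq_bigr => k _; rewrite linearZ.
Qed.

Section Laguerre.
Context {R : realType}.
Implicit Types (a b : R) (n : nat).

Lemma gbinom0 (x : R) : gbinom x 0 = 1.
Proof. by rewrite /gbinom big_ord0 fact0 divr1. Qed.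

Lemma gbinomS (x : R) m : gbinom (x + 1) m.+1 = gbinom x m + gbinom x m.+1.
Proof.
rewrite /gbinom big_ord_recl big_ord_recr /= subr0.
have -> : \prod_(i < m) (x + 1 - (bump 0 i)%:R) = \prod_(i < m) (x - i%:R).
  by apply: eq_bigr => i _; rewrite /bump /= add1n -natr1; ring.
have fact_neq0 : (m`!)%:R != 0 :> R by rewrite pnatr_eq0 -lt0n fact_gt0.
have succ_neq0 : (m.+1)%:R != 0 :> R by rewrite pnatr_eq0.
rewrite factS natrM; field.
by rewrite fact_neq0 /= addrC natr1.
Qed.

Lemma laguerre0 a b : laguerre a 0 = laguerre b 0.
Proof. by rewrite /laguerre !big_ord1 /= !sub0n !gbinom0. Qed.

Lemma laguerreS a n : laguerre (a + 1) n.+1 = laguerre (a + 1) n + laguerre a n.+1.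
Proof.
rewrite /laguerre [X in _ = _ + X]big_ord_recr [LHS]big_ord_recr /= [RHS]addrA.
rewrite !subnn !gbinom0 -big_split /=; congr (_ + _).
apply: eq_bigr => k _; rewrite -scalerDl -rmorphD -mulrDr subSn; last by rewrite -ltnS.
rewrite (_ : n.+1%:R + (a + 1) = n.+1%:R + a + 1) ?gbinomS; last by ring.
by rewrite -natr1 addrAC -addrA.
Qed.

Lemma laguerre_sum a n : laguerre (a + 1) n = \sum_(k < n.+1) laguerre a k.
Proof.
elim: n => [|n IH]; first by rewrite big_ord1 (laguerre0 _ a).
by rewrite laguerreS IH [RHS]big_ord_recr.
Qed.

Lemma coef_laguerre_deg b n :
  (laguerre b n)`_n = real_complex R ((-1) ^+ n / (n`!)%:R).
Proof.
rewrite /laguerre coef_sum big_ord_recr /= big1 ?add0r.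
  by rewrite coefZ coefXn eqxx mulr1 subnn gbinom0 mulr1.
by move=> [k /= kn] _; rewrite coefZ coefXn gtn_eqF // mulr0.
Qed.

Lemma coef_laguerre_gt b n i : (n < i)%N -> (laguerre b n)`_i = 0.
Proof.
move=> ni; rewrite /laguerre coef_sum big1 // => -[k /= kn] _.
by rewrite coefZ coefXn gtn_eqF ?mulr0 // (leq_ltn_trans _ ni) // -ltnS.
Qed.

Lemma lead_laguerre_neq0 b n : (laguerre b n)`_n != 0.
Proof.
rewrite coef_laguerre_deg (inj_eq (@complexI R)) mulf_eq0 invr_eq0 pnatr_eq0.
by rewrite expf_eq0 oppr_eq0 oner_eq0 andbF -lt0n fact_gt0.
Qed.

Lemma laguerre_coord_eq0 b {N} {c : nat -> R[i]} :
  (forall k, (N <= k)%N -> c k = 0) ->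
  \sum_(k < N) c k *: laguerre b k = 0 -> forall k, c k = 0.
Proof.
elim: N c => [|N IH] c c0; first by move=> _ k; apply: c0.
rewrite big_ord_recr /= => sum0.
have cN : c N = 0.
  have := congr1 (fun P : {poly R[i]} => P`_N) sum0.
  rewrite /= coef0 coefD coef_sum big1 ?add0r; last first.
    by move=> k _; rewrite coefZ coef_laguerre_gt ?mulr0.
  by rewrite coefZ => /eqP; rewrite mulf_eq0 (negbTE (lead_laguerre_neq0 _ _)) orbF => /eqP.
apply: IH; last by move: sum0; rewrite cN scale0r addr0.
by move=> k; rewrite leq_eqVlt => /predU1P[<-|/c0].
Qed.

Lemma laguerre_sum_shift a {N} {c : nat -> R[i]} :
  (forall k, (N <= k)%N -> c k = 0) ->
  \sum_(k < N) c k *: laguerre a k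
  = \sum_(k < N) (c k - c k.+1) *: laguerre (a + 1) k.
Proof.
move=> c0; under [RHS]eq_bigr do rewrite laguerre_sum.
by rewrite sumZ_partial_sums c0 //; apply: eq_bigr => k _; rewrite subr0.
Qed.

End Laguerre.

Section SquaredModulus.
Context {R : realType}.
Implicit Types z w : R[i].

Lemma sqmod_ge0 z : 0 <= sqmod z.
Proof. by rewrite /sqmod addr_ge0 // sqr_ge0. Qed.

Lemma sqmodN z : sqmod (- z) = sqmod z.
Proof. by case: z => a b; rewrite /sqmod /=; ring. Qed.

Lemma sqmodM z w : sqmod (z * w) = sqmod z * sqmod w.
Proof. by case: z => a b; case: w => c e; rewrite /sqmod /=; ring. Qed.

Lemma sqmodD_le z w : sqmod (z + w) <= 2 * (sqmod z + sqmod w).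
Proof.
case: z => a b; case: w => c e; rewrite /sqmod /= -subr_ge0.
rewrite (_ : _ - _ = (a - c) ^+ 2 + (b - e) ^+ 2) ?addr_ge0 ?sqr_ge0 //; ring.
Qed.

Lemma sqmodB_le z w : sqmod (z - w) <= 2 * (sqmod z + sqmod w).
Proof. by rewrite -(sqmodN w) sqmodD_le. Qed.

Lemma sqmod0 : sqmod (0 : R[i]) = 0.
Proof. by rewrite /sqmod /= expr0n addr0. Qed.

Lemma sqmod_le0 z : sqmod z <= 0 -> z = 0.
Proof.
case: z => a b; rewrite /sqmod /= => le0.
have a0 : a ^+ 2 = 0 by apply/eqP; rewrite eq_le sqr_ge0 andbT; nra.
have b0 : b ^+ 2 = 0 by apply/eqP; rewrite eq_le sqr_ge0 andbT; nra.
by move/eqP: a0; move/eqP: b0; rewrite !sqrf_eq0 => /eqP-> /eqP->.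
Qed.

End SquaredModulus.

Section Series.
Context {R : realType}.
Implicit Types u v : R^nat.

Lemma cvg_series_eq_tail u v n : (forall k, (n <= k)%N -> u k = v k) ->
  cvgn (series v) ->
  series u @ \oo --> limn (series v) - series v n + series u n.
Proof.
move=> uv cv; rewrite -(cvg_shiftn n).
have -> : [sequence series u (m + n)%N]_m =
          (fun m => series v (m + n)%N - series v n + series u n).
  apply/funext => m /=; rewrite !series_addn [series v n + _]addrC addrK addrC.
  by congr (_ + _); apply: eq_big_nat => k /andP[nk _]; rewrite uv.
apply: cvgD; last exact: cvg_cst.
by apply: cvgB; [rewrite (cvg_shiftn n (series v)) | exact: cvg_cst].
Qed.

Lemma lim_series_eq_tail u v n : (forall k, (n <= k)%N -> u k = v k) ->
  cvgn (series v) -> limn (series u) = limn (series v) - series v n + series u n.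
Proof. by move=> uv cv; apply/cvg_lim => //; apply: cvg_series_eq_tail. Qed.

Lemma cvg_series_tail {u} : cvgn (series u) ->
  (fun n => limn (series u) - series u n.+1) @ \oo --> 0.
Proof.
move=> cu; rewrite -(subrr (limn (series u))).
by apply: cvgB; [exact: cvg_cst | rewrite (cvg_shiftS (series u))].
Qed.

Lemma le_lim_series u j : (forall k, 0 <= u k) -> cvgn (series u) ->
  u j <= limn (series u).
Proof.
move=> u0 cu; apply: le_trans (nondecreasing_cvgn_le _ cu j.+1).
  by rewrite seriesSr lerDr /series /= sumr_ge0.
by apply/nondecreasing_seqP => m; rewrite seriesSr lerDl.
Qed.

End Series.

Section SquareSummable.
Context {R : realType}.
Implicit Types f g c : nat -> R[i].

Lemma l2dist2E {f c N} : l2 f -> (forall k, (N <= k)%N -> c k = 0) ->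
  l2dist2 f c = limn (series (fun k => sqmod (f k))) - series (fun k => sqmod (f k)) N
                + series (fun k => sqmod (f k - c k)) N.
Proof. by move=> hf c0; apply: lim_series_eq_tail => // k /c0 ->; rewrite subr0. Qed.

Lemma sqmod_le_l2dist2 {f c N} j : l2 f -> (forall k, (N <= k)%N -> c k = 0) ->
  sqmod (f j - c j) <= l2dist2 f c.
Proof.
move=> hf c0; apply: le_lim_series => [k|]; first exact: sqmod_ge0.
apply/cvg_ex; eexists; apply: (cvg_series_eq_tail _ _ N _ hf).
by move=> k /c0 ->; rewrite subr0.
Qed.

Lemma l2_eq_of_diff {f g} : l2 f -> l2 g ->
  (forall k, f k - f k.+1 = g k - g k.+1) -> f = g.
Proof.
move=> hf hg fg.
have fg_const k : f k - g k = f 0%N - g 0%N.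
  elim: k => // k <-; apply/eqP; rewrite -subr_eq0.
  by rewrite -oppr0 -(subrr (g k - g k.+1)) -{1}fg; apply/eqP; ring.
suff fg0 : f 0%N - g 0%N = 0.
  by apply/funext => k; apply/eqP; rewrite -subr_eq0 fg_const fg0.
apply: sqmod_le0; rewrite -(mulr0 2) -(addr0 0) -ler_pdivrMl //.
apply: (ler_cvg_to (cvg_cst _) (cvgD (cvg_series_cvg_0 hf) (cvg_series_cvg_0 hg))).
by apply: nearW => k /=; rewrite -(fg_const k) ler_pdivrMl // sqmodB_le.
Qed.

End SquareSummable.

Section CoordinateGraph.
Context {R : realType} {alpha : R} {d : nat -> R[i]} {T : {poly R[i]} -> {poly R[i]}}.
Hypothesis T_linear : forall (a : R[i]) (u v : {poly R[i]}), T (a *: u + v) = a *: T u + T v.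
Hypothesis T_eigen : forall n, T (laguerre (alpha + 1) n) = d n *: laguerre (alpha + 1) n.

Local Notation q := (laguerre alpha).
Local Notation vanish_from N c := (forall k, (N <= k)%N -> c k = 0).

Lemma T_laguerre_sum N (c : nat -> R[i]) : vanish_from N c ->
  T (\sum_(k < N) c k *: q k)
  = \sum_(k < N) (d k * (c k - c k.+1)) *: laguerre (alpha + 1) k.
Proof.
move=> c0; rewrite laguerre_sum_shift //; etransitivity.
  exact: linear_sumZ _ T_linear N (fun k => c k - c k.+1) (laguerre (alpha + 1)).
by apply: eq_bigr => k _; rewrite T_eigen scalerA mulrC.
Qed.

Lemma T_coordP {N} {c t : nat -> R[i]} : vanish_from N c -> vanish_from N t ->
  T (\sum_(k < N) c k *: q k) = \sum_(k < N) t k *: q k <->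
  forall k, t k - t k.+1 = d k * (c k - c k.+1).
Proof.
move=> c0 t0; rewrite T_laguerre_sum // (laguerre_sum_shift _ t0); split; last first.
  by move=> ct; apply: eq_bigr => k _; rewrite ct.
move/eqP; rewrite -subr_eq0 -sumrB => /eqP sum0.
pose e k := d k * (c k - c k.+1) - (t k - t k.+1).
have e0 : forall k, e k = 0.
  apply: (laguerre_coord_eq0 (alpha + 1)) => [k Nk|].
    by rewrite /e !c0 ?t0 ?subrr ?mulr0 ?subr0 // (leq_trans Nk).
  by rewrite -[RHS]sum0; apply: eq_bigr => k _; rewrite scalerBl.
by move=> k; apply/eqP; rewrite eq_sym -subr_eq0 -/(e k) e0.
Qed.

Lemma qcoord_sum {P} {c : nat -> R[i]} {N} : qcoord alpha P c -> vanish_from N c ->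
  P = \sum_(k < N) c k *: q k.
Proof.
move=> [M [c0 ->]] c0'.
have vanishZ L : vanish_from L c -> vanish_from L (fun k => c k *: q k).
  by move=> cL k /cL ->; rewrite scale0r.
by rewrite (sum_ord_widen (vanishZ _ c0) (leq_maxl M N))
  (sum_ord_widen (vanishZ _ c0') (leq_maxr M N)).
Qed.

Lemma qcoord_graph {P} {c t : nat -> R[i]} :
  qcoord alpha P c -> qcoord alpha (T P) t ->
  forall k, t k - t k.+1 = d k * (c k - c k.+1).
Proof.
move=> Pc TPt; have [M [c0 _]] := Pc; have [M' [t0 _]] := TPt.
have cN : vanish_from (maxn M M') c by move=> k /(leq_trans (leq_maxl M M')) /c0.
have tN : vanish_from (maxn M M') t by move=> k /(leq_trans (leq_maxr M M')) /t0.
by apply/(T_coordP cN tN); rewrite -(qcoord_sum Pc cN) -(qcoord_sum TPt tN).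
Qed.

Lemma qcoord_T_sum N (c t : nat -> R[i]) : vanish_from N c -> vanish_from N t ->
  (forall k, t k - t k.+1 = d k * (c k - c k.+1)) ->
  qcoord alpha (T (\sum_(k < N) c k *: q k)) t.
Proof. by move=> c0 t0 ct; exists N; split => //; apply/(T_coordP c0 t0). Qed.

Lemma in_graph_closure_diff {f h : nat -> R[i]} :
  l2 f -> l2 h -> in_graph_closure alpha T f h ->
  forall j, h j - h j.+1 = d j * (f j - f j.+1).
Proof.
move=> hf hh fh j; apply/eqP; rewrite -subr_eq0; apply/eqP/sqmod_le0.
pose K := 8 * (1 + sqmod (d j)).
have sqd0 := sqmod_ge0 (d j).
have K0 : 0 < K by rewrite mulr_gt0 // ltr_pwDl.
apply/ler_addgt0Pr => e e0; rewrite add0r.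
have [P [c [t [Pc TPt fc ht]]]] := fh (e / K) (divr_gt0 e0 K0).
have [M [c0 _]] := Pc; have [M' [t0 _]] := TPt.
have diff_le (x y : nat -> R[i]) N : l2 x -> (forall k, (N <= k)%N -> y k = 0) ->
    l2dist2 x y < e / K -> sqmod ((x j - y j) - (x j.+1 - y j.+1)) <= 4 * (e / K).
  move=> hx y0 xy; apply: le_trans (sqmodB_le _ _) _.
  have := sqmod_le_l2dist2 j hx y0; have := sqmod_le_l2dist2 j.+1 hx y0; lra.
have fc_le := diff_le _ _ _ hf c0 fc; have ht_le := diff_le _ _ _ hh t0 ht.
have -> : h j - h j.+1 - d j * (f j - f j.+1) =
    (h j - t j - (h j.+1 - t j.+1)) - d j * (f j - c j - (f j.+1 - c j.+1))
    + (t j - t j.+1 - d j * (c j - c j.+1)) by ring.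
rewrite (qcoord_graph Pc TPt j) subrr addr0.
apply: le_trans (sqmodB_le _ _) _; rewrite sqmodM.
have eK : K * (e / K) = e by rewrite mulrC divfK // gt_eqF.
have sqd_le := ler_wpM2l sqd0 fc_le.
rewrite -eK /K; move: (e / K) fc_le ht_le sqd_le => x; lra.
Qed.

Lemma in_graph_closure_of_diff {f g : nat -> R[i]} :
  l2 f -> l2 g -> (forall k, g k - g k.+1 = d k * (f k - f k.+1)) ->
  (fun n => n.+1%:R * sqmod (f n * d n - g n)) @ \oo --> 0 ->
  in_graph_closure alpha T f g.
Proof.
move=> hf hg gf err0 e e0.
have tailf := cvg_series_tail hf.
have tailg : (fun n => limn (series (fun k => sqmod (g k)))
    - series (fun k => sqmod (g k)) n.+1 + n.+1%:R * sqmod (f n * d n - g n)) @ \oo --> 0.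
  by rewrite -[0]addr0; apply: cvgD => //; apply: cvg_series_tail.
have [n [fn gn]] := filter_ex (filterI (cvgr_lt _ tailf _ e0) (cvgr_lt _ tailg _ e0)).
(* truncate f after n and correct g by the constant that makes the last coordinate f_n d_n *)
pose c k := if (k <= n)%N then f k else 0.
pose t k := if (k <= n)%N then g k - (g n - f n * d n) else 0.
have c0 : vanish_from n.+1 c by move=> k; rewrite /c ltnNge => /negbTE ->.
have t0 : vanish_from n.+1 t by move=> k; rewrite /t ltnNge => /negbTE ->.
exists (\sum_(k < n.+1) c k *: q k), c, t; split.
- by exists n.+1.
- apply: qcoord_T_sum c0 t0 _ => k; rewrite /c /t; case: (ltngtP k n) => [kn|nk|->].
  + by rewrite -gf; ring.
  + by rewrite !subrr mulr0.
  + by ring.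
- rewrite (l2dist2E hf c0) [X in _ + X]big_nat_cond big1 ?addr0 //.
  by move=> k /andP[/andP[_]]; rewrite ltnS /c => -> _; rewrite subrr sqmod0.
- rewrite (l2dist2E hg t0) [X in _ + X](eq_big_nat _ _ (F2 := fun=> sqmod (f n * d n - g n))).
    by rewrite sumr_const_nat subn0 -mulr_natl.
  move=> k /andP[_]; rewrite ltnS /t => ->.
  by rewrite -sqmodN; congr sqmod; ring.
Qed.

End CoordinateGraph.

Lemma gseqE {R : realType} (f d : nat -> R[i]) S k :
  gseq f d S k = S - psum f d k + f k * d k.
Proof. by rewrite /gseq; case: eqP => // ->; rewrite /psum big_geq // subr0. Qed.

Lemma psumS {R : realType} (f d : nat -> R[i]) k :
  psum f d k.+1 = psum f d k + f k.+1 * (d k.+1 - d k).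
Proof. by rewrite /psum big_nat_recr. Qed.

Lemma gseq_diff {R : realType} (f d : nat -> R[i]) S k :
  gseq f d S k - gseq f d S k.+1 = d k * (f k - f k.+1).
Proof. by rewrite !gseqE psumS; ring. Qed.

Theorem theorem7 (R : realType) (alpha : R) (d : nat -> R[i])
    (T : {poly R[i]} -> {poly R[i]}) (f : nat -> R[i]) (S : R[i]) :
  -1 < alpha ->
  inDtilde d ->
  (* T = E_{p,d} with p = (L_n^(alpha+1)) : the linear map with T p_n = d_n p_n *)
  (forall (a : R[i]) (u v : {poly R[i]}), T (a *: u + v) = a *: T u + T v) ->
  (forall n, T (laguerre (alpha + 1) n) = d n *: laguerre (alpha + 1) n) ->
  l2 f ->
  (* (i) *)
  (fun n => sqmod (psum f d n - S)) @ \oo --> 0 ->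
  (* (ii) *)
  l2 (gseq f d S) ->
  (* (iii) *)
  (fun n => n.+1%:R * sqmod (f n * d n - gseq f d S n)) @ \oo --> 0 ->
  in_closure_domain alpha T f /\
  in_graph_closure alpha T f (gseq f d S) /\
  (forall h, l2 h -> in_graph_closure alpha T f h -> h = gseq f d S).
Proof.
(* (i) is implied by (iii) (see gseqE); alpha > -1 and d in D~ only serve to make
   H(q) a Hilbert space, which is modelled here by l_2 coordinates *)
move=> _ _ T_linear T_eigen hf _ hg err0.
have closure := in_graph_closure_of_diff T_linear T_eigen hf hg (gseq_diff f d S) err0.
split; first by exists (gseq f d S).
split=> [// | h hh fh]; apply: (l2_eq_of_diff hh hg) => k.
by rewrite (in_graph_closure_diff T_linear T_eigen hf hh fh) gseq_diff.
Qed.
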